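(* Consider any instance of the splittable capacitated arc routing problem (SCARP) as defined in the context, with robot index set $\mathcal{R}$, and suppose it admits an optimal solution. Then there exists an optimal solution $(x,y)$ such that $|R_{2+}(y)| < m := |\mathcal{U}|$; that is, fewer than $m$ robots spray two or more edges, and every other robot $r\in\mathcal{R}$ either sprays nothing ($S_r(y)=\emptyset$) or sprays exactly one edge ($|S_r(y)|=1$).
   Context: SCARP (basic formulation). Let $\mathcal{G}=(\mathcal{V},\mathcal{U})$ be an undirected connected graph with vertex set $\mathcal{V}=\{1,\dots,n\}$, vertex $1$ being the depot. $\mathcal{U}$ is the set of undirected edges, written as pairs $(i,j)$ with $i<j$, and $\mathcal{E}=\{(i,j),(j,i):(i,j)\in\mathcal{U}\}$ is the set of directed arcs. Each edge $(i,j)\in\mathcal{U}$ has a cost $C_{ij}\ge 0$ and a demand $D_{ij}\ge 0$; $P>0$ is the robot capacity; $\mathcal{R}$ is a finite set of robots (robot tours). Decision variables: $x^r_{ij}\in\{0,1\}$ for $(i,j)\in\mathcal{E}$, $r\in\mathcal{R}$ (robot $r$ traverses arc $(i,j)$), and $y^r_{ij}\ge 0$ for $(i,j)\in\mathcal{U}$, $r\in\mathcal{R}$ (amount sprayed by $r$ on edge $(i,j)$; $y^r_{ij}=0$ if $D_{ij}=0$). The problem is: minimize $\sum_{r\in\mathcal{R}}\sum_{(i,j)\in\mathcal{U}} C_{ij}(x^r_{ij}+x^r_{ji})$ subject to: (i) $\sum_{(i,j)\in\mathcal{U}} y^r_{ij}\le P$ for all $r$; (ii) $\sum_{r\in\mathcal{R}}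 y^r_{ij}=D_{ij}$ for all $(i,j)\in\mathcal{U}$; (iii) $y^r_{ij}\le P(x^r_{ij}+x^r_{ji})$ for all $(i,j)\in\mathcal{U}$, $r$; (iv) flow conservation $\sum_{i:(i,k)\in\mathcal{E}} x^r_{ik}=\sum_{j:(k,j)\in\mathcal{E}} x^r_{kj}$ for all $k\in\mathcal{V}$, $r$; (v) connectivity: for every $\mathcal{S}\subset\mathcal{V}$ with $1\in\mathcal{S}$, $\mathcal{T}=\mathcal{V}\setminus\mathcal{S}$, and every $r$, $\sum_{i\in\mathcal{S},j\in\mathcal{T},(i,j)\in\mathcal{E}} P\,x^r_{ij}\ge \sum_{(i,j)\in\mathcal{U},\,i,j\in\mathcal{T}} y^r_{ij}$. A solution is a pair $(x,y)$ satisfying all constraints; it is optimal if it minimizes the objective. Support: for a solution $y$ and robot $r$, $S_r(y)=\{(i,j)\in\mathcal{U}: y^r_{ij}>0\}$, and $R_{2+}(y)=\{r\in\mathcal{R}: |S_r(y)|\ge 2\}$. *)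

From HB Require Import structures.
From mathcomp Require Import all_boot all_order all_algebra.
From mathcomp Require Import reals.
Set Implicit Arguments. Unset Strict Implicit. Unset Printing Implicit Defensive.
Import Order.TTheory GRing.Theory Num.Theory.
Local Open Scope ring_scope.

(* An instance: vertex finType V with depot, undirected edge set U given as
   oriented pairs (one orientation per edge, no loops), robots finType Rb,
   costs C, demands D (on edges), capacity P.
   Decision variables: x : Rb -> V*V -> bool (only values on arcs in E are
   used) and y : Rb -> V*V -> R (only values on edges in U are used). *)

Section SCARP.
Variables (R : realType) (V : finType) (depot : V) (U : {set V * V})
          (Rb : finType) (C D : V * V -> R) (P : R).

Definition arcs : {set V * V} := U :|: [set (e.2, e.1) | e in U].

Definition b2R (b : bool) : R := (b : nat)%:R.

Definition objective (x : Rb -> V * V -> bool) : R :=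
  \sum_(r : Rb) \sum_(e in U) C e * (b2R (x r e) + b2R (x r (e.2, e.1))).

Definition feasible (x : Rb -> V * V -> bool) (y : Rb -> V * V -> R) : Prop :=
  (forall r e, e \in U -> 0 <= y r e) /\
  (forall r e, e \in U -> D e = 0 -> y r e = 0) /\
  (forall r, \sum_(e in U) y r e <= P) /\
  (forall e, e \in U -> \sum_(r : Rb) y r e = D e) /\
  (* (iii) spraying only on traversed edges *)
  (forall r e, e \in U -> y r e <= P * (b2R (x r e) + b2R (x r (e.2, e.1)))) /\
  (forall r (k : V),
     (\sum_(a in arcs | a.2 == k) (x r a : nat) =
      \sum_(a in arcs | a.1 == k) (x r a : nat))%N) /\
  (forall (S : {set V}) r, depot \in S ->
     \sum_(e in U | (e.1 \notin S) && (e.2 \notin S)) y r e <=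
     \sum_(a in arcs | (a.1 \in S) && (a.2 \notin S)) P * b2R (x r a)).

Definition optimal (x : Rb -> V * V -> bool) (y : Rb -> V * V -> R) : Prop :=
  feasible x y /\
  forall x' y', feasible x' y' -> objective x <= objective x'.

Definition support (y : Rb -> V * V -> R) (r : Rb) : {set V * V} :=
  [set e in U | 0 < y r e].

Definition R2plus (y : Rb -> V * V -> R) : {set Rb} :=
  [set r | (2 <= #|support y r|)%N].

End SCARP.

Definition scarp_graph (V : finType) (U : {set V * V}) : Prop :=
  (forall e, e \in U -> e.1 != e.2) /\
  (forall i j, (i, j) \in U -> (j, i) \notin U) /\
  (forall u v : V, connect (fun a b => ((a, b) \in U) || ((b, a) \in U)) u v).

From Pilot Require Import Defs.
From HB Require Import structures.
From mathcomp Require Import all_boot all_order all_algebra.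
From mathcomp Require Import reals.
From mathcomp Require Import ring lra.
Import Order.TTheory GRing.Theory Num.Theory.
Local Open Scope ring_scope.
Set Implicit Arguments. Unset Strict Implicit. Unset Printing Implicit Defensive.

(* The objective depends on the routing x only, and the constraints on the
   spraying y only through its row sums (load of each robot), its column sums
   (demand of each edge), its sign and its support: keeping x and replacing y
   by a nonnegative y' with the same row and column sums and a smaller support
   preserves feasibility, hence optimality.  If at least #|U| robots spray two
   or more edges, then the (robot, edge) spraying pairs outnumber the linear
   conditions "row sum of a robot spraying something" and "column sum of an
   edge other than a fixed e0" (the last column sum follows from the others).
   Hence there is a nonzero perturbation z, supported on the spraying pairs,
   with zero row and column sums; moving y along z until the first coordinate
   vanishes strictly shrinks the support, and iterating this terminates. *)

Lemma nonzero_kernel_vector (F : fieldType) (I J : finType)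
    (A : {set I}) (B : {set J}) (a : J -> I -> F) :
  (#|B| < #|A|)%N ->
  exists z : I -> F,
    [/\ forall i, i \notin A -> z i = 0, exists i, z i != 0 &
        forall j, j \in B -> \sum_(i in A) a j i * z i = 0].
Proof.
move=> ltBA.
pose M : 'M[F]_(#|A|, #|B|) := \matrix_(k, l) a (enum_val l) (enum_val k).
have : ~~ row_free M.
  by rewrite /row_free (ltn_eqF (leq_ltn_trans (rank_leq_col M) ltBA)).
rewrite -kermx_eq0 => /rowV0Pn [u /sub_kermxP uM /rV0Pn [k0 uk0]].
have [i0 i0A] : exists i0, i0 \in A by apply/card_gt0P; apply: leq_ltn_trans ltBA.
pose z i := if i \in A then u 0 (enum_rank_in i0A i) else 0.
have zE k : z (enum_val k) = u 0 k by rewrite /z enum_valP enum_valK_in.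
exists z; split.
- by move=> i /negbTE iA; rewrite /z iA.
- by exists (enum_val k0); rewrite zE.
- move=> j jB; rewrite big_enum_val.
  have := congr1 (fun v : 'rV_#|B| => v 0 (enum_rank_in jB j)) uM.
  rewrite !mxE => {}uM; apply: etrans uM; apply: eq_bigr => k _.
  by rewrite zE mxE enum_rankK_in // mulrC.
Qed.

Section Spraying.
Variables (R : realType) (V : finType) (U : {set V * V}) (Rb : finType).
Implicit Types (y z : Rb -> V * V -> R) (r : Rb) (e : V * V).

Definition spray_pairs y : {set Rb * (V * V)} :=
  [set p | (p.2 \in U) && (0 < y p.1 p.2)].

Definition active y : {set Rb} := [set r | (0 < #|Defs.support U y r|)%N].

Definition rowsum y r : R := \sum_(e in U) y r e.
Definition colsum y e : R := \sum_(r : Rb) y r e.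

Lemma mem_spray_pairs y r e :
  ((r, e) \in spray_pairs y) = (e \in Defs.support U y r).
Proof. by rewrite !inE. Qed.

Lemma card_spray_pairs y :
  #|spray_pairs y| = (\sum_r #|Defs.support U y r|)%N.
Proof.
rewrite -sum1_card big_mkcond.
rewrite (eq_bigr (fun p => if (p.1, p.2) \in spray_pairs y then 1%N else 0%N));
  last by case.
rewrite -(pair_bigA _ (fun r e => if (r, e) \in spray_pairs y then 1%N else 0%N)).
apply: eq_bigr => r _; rewrite -sum1_card [RHS]big_mkcond.
by apply: eq_bigr => e _; rewrite mem_spray_pairs.
Qed.

(* Each active robot contributes one spraying pair, and each robot of
   R_{2+} at least one more. *)
Lemma card_active_R2plus y :
  (#|active y| + #|R2plus U y| <= #|spray_pairs y|)%N.
Proof.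
rewrite card_spray_pairs -!sum1_card.
rewrite [X in (X + _)%N]big_mkcond [X in (_ + X)%N]big_mkcond -big_split /=.
by apply: leq_sum => r _; rewrite !inE; case: #|Defs.support U y r| => [|[|k]].
Qed.

Lemma sum_spray_pairs y (w f : Rb * (V * V) -> R) :
  (forall p, p \notin spray_pairs y -> w p = 0) ->
  \sum_(p in spray_pairs y) f p * w p =
  \sum_r \sum_(e in U) f (r, e) * w (r, e).
Proof.
move=> w0.
have offU r e : e \notin U -> w (r, e) = 0.
  by move=> eU; apply: w0; rewrite inE /= (negbTE eU).
rewrite (eq_bigr (fun r => \sum_e f (r, e) * w (r, e))); last first.
  move=> r _; rewrite [RHS](bigID (mem U)) /= [X in _ + X]big1 ?addr0 //.
  by move=> e eU; rewrite offU ?mulr0.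
rewrite (pair_bigA _ (fun r e => f (r, e) * w (r, e))) [LHS]big_mkcond.
by apply: eq_bigr => -[r e] _ /=; case: ifP => // /negbT /w0 ->; rewrite mulr0.
Qed.

Lemma balanced_direction y e0 : e0 \in U -> (#|U| <= #|R2plus U y|)%N ->
  exists z,
    [/\ forall r e, (r, e) \notin spray_pairs y -> z r e = 0,
        exists r e, z r e != 0,
        forall r, rowsum z r = 0 &
        forall e, e \in U -> colsum z e = 0].
Proof.
move=> e0U le_U_R2.
set S := spray_pairs y.
pose B : {set Rb + (V * V)} := inl @: active y :|: inr @: (U :\ e0).
pose a (j : Rb + (V * V)) (p : Rb * (V * V)) : R :=
  match j with inl r => (p.1 == r)%:R | inr e => (p.2 == e)%:R end.
have ltBS : (#|B| < #|S|)%N.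
  have leB : (#|B| <= #|active y| + #|U :\ e0|)%N.
    by rewrite (leq_trans (leq_card_setU _ _)) // leq_add // leq_imset_card.
  apply: leq_ltn_trans leB _; apply: leq_trans (card_active_R2plus y).
  by rewrite ltn_add2l (leq_trans _ le_U_R2) // (cardsD1 e0 U) e0U.
have [w [w0 [[r0 e1] nz_w] w_eq]] := nonzero_kernel_vector a ltBS.
pose z r e := w (r, e).
have z0 r e : (r, e) \notin S -> z r e = 0 by exact: w0.
have row_eq r : \sum_(p in S) a (inl r) p * w p = rowsum z r.
  rewrite sum_spray_pairs // (bigD1 r) //= [X in _ + X]big1 ?addr0.
    by apply: eq_bigr => e _; rewrite eqxx mul1r.
  by move=> r' /negbTE ne; apply: big1 => e _; rewrite ne mul0r.
have col_eq e : e \in U -> \sum_(p in S) a (inr e) p * w p = colsum z e.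
  move=> eU; rewrite sum_spray_pairs //; apply: eq_bigr => r _.
  rewrite (bigD1 e) //= eqxx mul1r big1 ?addr0 // => e' /andP [_ /negbTE ne].
  by rewrite ne mul0r.
have rows r : rowsum z r = 0.
  have [r_act | r_inact] := boolP (r \in active y).
    by rewrite -row_eq w_eq // inE imset_f.
  apply: big1 => e eU; apply: z0; rewrite mem_spray_pairs.
  by apply: contra r_inact => e_supp; rewrite inE; apply/card_gt0P; exists e.
have cols_but_e0 e : e \in U -> e != e0 -> colsum z e = 0.
  by move=> eU ne; rewrite -col_eq // w_eq // inE orbC imset_f // !inE ne.
exists z; split => //; first by exists r0, e1.
move=> e eU; have [-> | ne] := eqVneq e e0; last exact: cols_but_e0.
have : \sum_(e in U) colsum z e = 0.
  by rewrite exchange_big; apply: big1 => r _; exact: rows.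
rewrite (bigD1 e0) //= big1 ?addr0 // => e' /andP [e'U ne'].
exact: cols_but_e0.
Qed.

(* One step: moving y along a balanced perturbation as far as nonnegativity
   allows (ratio test) kills at least one spraying pair. *)
Lemma shrink_support y e0 : e0 \in U -> (#|U| <= #|R2plus U y|)%N ->
  (forall r e, e \in U -> 0 <= y r e) ->
  exists y',
    [/\ forall r e, e \in U -> 0 <= y' r e,
        spray_pairs y' \proper spray_pairs y,
        forall r, rowsum y' r = rowsum y r &
        forall e, e \in U -> colsum y' e = colsum y e].
Proof.
move=> e0U le_U_R2 y_ge0.
have [z [z0 [r0 [e1 nz_z]] rows cols]] := balanced_direction e0U le_U_R2.
have y_pos r e : (r, e) \in spray_pairs y -> 0 < y r e.
  by rewrite inE => /andP [].
pose N := [set p in spray_pairs y | z p.1 p.2 < 0].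
have [N0 | [p1 p1N]] := set_0Vmem N.
  have z_ge0 r e : e \in U -> 0 <= z r e.
    move=> eU; have [rS | rS] := boolP ((r, e) \in spray_pairs y); last by rewrite z0.
    have : (r, e) \notin N by rewrite N0 inE.
    by rewrite inE rS /= -leNgt.
  have r0S : (r0, e1) \in spray_pairs y by apply: contraR nz_z => /z0 ->.
  have e1U : e1 \in U by move: r0S; rewrite inE => /andP [].
  by have /eqP := psumr_eq0P (fun e eU => z_ge0 r0 e eU) (rows r0) e1U; rewrite (negbTE nz_z).
pose ratio p := y p.1 p.2 / - z p.1 p.2.
have [ps psN ps_min] := @arg_minP _ _ _ p1 (fun p => p \in N) ratio p1N.
set t := ratio ps.
have /andP [psS zps] : (ps \in spray_pairs y) && (z ps.1 ps.2 < 0).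
  by move: psN; rewrite inE.
have t_ge0 : 0 <= t by rewrite divr_ge0 ?oppr_ge0 ?ltW // y_pos // -surjective_pairing.
pose y' r e := y r e + t * z r e.
exists y'; split.
- move=> r e eU; have [rS | rS] := boolP ((r, e) \in spray_pairs y); last first.
    by rewrite /y' z0 // mulr0 addr0 y_ge0.
  have [z_neg | z_ge0] := ltP (z r e) 0; last first.
    by apply: addr_ge0; [exact: y_ge0 | exact: mulr_ge0].
  have t_le : t * - z r e <= y r e.
    by rewrite -ler_pdivlMr ?oppr_gt0 //; apply: (ps_min (r, e)); rewrite inE rS z_neg.
  by rewrite /y'; lra.
- apply/properP; split.
    apply/subsetP => -[r e]; apply: contraTT => rS.
    by rewrite !inE /y' z0 // mulr0 addr0; rewrite inE in rS.
  exists ps => //; rewrite inE /y' negb_and; apply/orP; right.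
  have -> : y ps.1 ps.2 + t * z ps.1 ps.2 = 0 by rewrite /t /ratio; field; rewrite lt_eqF.
  by rewrite ltxx.
- by move=> r; rewrite /rowsum big_split /= -mulr_sumr [X in t * X]rows mulr0 addr0.
- by move=> e eU; rewrite /colsum big_split /= -mulr_sumr [X in t * X]cols // mulr0 addr0.
Qed.

Lemma respray y : (0 < #|U|)%N -> (forall r e, e \in U -> 0 <= y r e) ->
  exists y',
    [/\ forall r e, e \in U -> 0 <= y' r e,
        forall r e, e \in U -> 0 < y' r e -> 0 < y r e,
        forall r, rowsum y' r = rowsum y r,
        forall e, e \in U -> colsum y' e = colsum y e &
        (#|R2plus U y'| < #|U|)%N].
Proof.
case/card_gt0P=> e0 e0U y_ge0.
suff [y' [y'_ge0 sub rows cols small]] : exists y',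
    [/\ forall r e, e \in U -> 0 <= y' r e, spray_pairs y' \subset spray_pairs y,
        forall r, rowsum y' r = rowsum y r,
        forall e, e \in U -> colsum y' e = colsum y e &
        (#|R2plus U y'| < #|U|)%N].
  exists y'; split => // r e eU pos.
  by have := subsetP sub (r, e); rewrite !inE /= eU pos => /(_ isT) /andP [].
have [n le_n] : exists n, (#|spray_pairs y| <= n)%N by exists #|spray_pairs y|.
elim: n y le_n y_ge0 => [|n IH] y le_n y_ge0.
all: have [small | big] := ltnP #|R2plus U y| #|U|; first by exists y.
all: have [y1 [y1_ge0 lt_y1 rows1 cols1]] := shrink_support e0U big y_ge0.
all: have := proper_card lt_y1.
  by rewrite ltnNge (leq_trans le_n).
move=> lt_card; have [|y' [y'_ge0 sub rows cols small]] := IH y1 _ y1_ge0.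
  by rewrite -ltnS (leq_trans lt_card).
exists y'; split => //.
- exact: subset_trans sub (proper_sub lt_y1).
- by move=> r; rewrite rows rows1.
- by move=> e eU; rewrite cols // cols1.
Qed.

End Spraying.

Section Respray.
Variables (R : realType) (V : finType) (depot : V) (U : {set V * V})
          (Rb : finType) (C D : V * V -> R) (P : R).
Variables (x : Rb -> V * V -> bool) (y y' : Rb -> V * V -> R).
Hypotheses (y_ge0 : forall r e, e \in U -> 0 <= y r e)
           (y'_ge0 : forall r e, e \in U -> 0 <= y' r e)
           (supp_sub : forall r e, e \in U -> 0 < y' r e -> 0 < y r e)
           (rows_eq : forall r, rowsum U y' r = rowsum U y r)
           (cols_eq : forall e, e \in U -> colsum y' e = colsum y e).

Lemma respray_eq0 r e : e \in U -> y r e = 0 -> y' r e = 0.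
Proof.
move=> eU y0; apply/eqP; rewrite eq_le y'_ge0 // andbT leNgt.
by apply/negP => /(supp_sub eU); rewrite y0 ltxx.
Qed.

Lemma respray_le_rowsum r e : e \in U -> y' r e <= rowsum U y r.
Proof.
move=> eU; rewrite -rows_eq /rowsum (bigD1 e) //= lerDl.
by apply: sumr_ge0 => e' /andP [e'U _]; exact: y'_ge0.
Qed.

Lemma b2R_ge0 b : 0 <= b2R R b.
Proof. by case: b. Qed.

Lemma capacity_ge0 r : rowsum U y r <= P -> 0 <= P.
Proof. by apply: le_trans; apply: sumr_ge0 => e eU; exact: y_ge0. Qed.

(* The connectivity cut: if the robot crosses the cut, the right-hand side is
   at least P, which bounds its whole load; otherwise y vanishes beyond the
   cut, and so does y'. *)
Lemma respray_cut (S : {set V}) r :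
  rowsum U y r <= P ->
  \sum_(e in U | (e.1 \notin S) && (e.2 \notin S)) y r e <=
    \sum_(a in arcs U | (a.1 \in S) && (a.2 \notin S)) P * b2R R (x r a) ->
  \sum_(e in U | (e.1 \notin S) && (e.2 \notin S)) y' r e <=
    \sum_(a in arcs U | (a.1 \in S) && (a.2 \notin S)) P * b2R R (x r a).
Proof.
move=> cap cut_y; have P_ge0 := capacity_ge0 cap.
have [/existsP [a /and3P [aA aS xa]] | /existsPn no_arc] :=
  boolP [exists a, [&& a \in arcs U, (a.1 \in S) && (a.2 \notin S) & x r a]].
  apply: (@le_trans _ _ P).
    apply: le_trans (_ : rowsum U y' r <= P); last by rewrite rows_eq.
    rewrite /rowsum [X in _ <= X](bigID (fun e => (e.1 \notin S) && (e.2 \notin S))) /=.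
    by rewrite lerDl; apply: sumr_ge0 => e /andP [eU _]; exact: y'_ge0.
  rewrite (bigD1 a) ?aA //= xa mulr1 lerDl.
  by apply: sumr_ge0 => a' _; rewrite mulr_ge0 ?b2R_ge0.
have crossing0 : \sum_(a in arcs U | (a.1 \in S) && (a.2 \notin S)) P * b2R R (x r a) = 0.
  apply: big1 => a /andP [aA aS]; have := no_arc a; rewrite aA aS /= => /negbTE ->.
  by rewrite mulr0.
rewrite crossing0 in cut_y *.
have y0 e : (e \in U) && ((e.1 \notin S) && (e.2 \notin S)) -> y r e = 0.
  move: e; apply: psumr_eq0P => [e' /andP [e'U _] | ]; first exact: y_ge0.
  by apply/eqP; rewrite eq_le cut_y sumr_ge0 // => e' /andP [e'U _]; exact: y_ge0.
by rewrite big1 // => e /andP [eU eS]; apply: (respray_eq0 eU); apply: y0; rewrite eU eS.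
Qed.

(* Feasibility is preserved; besides the cut, the only non-obvious constraint
   is (iii): a pair sprayed by y' is sprayed by y, hence traversed. *)
Lemma feasible_respray :
  feasible depot U D P x y -> feasible depot U D P x y'.
Proof.
case=> [_ [zero_dem [cap [dem [trav [flow cut]]]]]].
have cap_r r : rowsum U y r <= P by exact: cap.
do !split => //.
- by move=> r e eU D0; apply: respray_eq0 eU (zero_dem r e eU D0).
- by move=> r; rewrite -[X in X <= _]/(rowsum U y' r) rows_eq.
- by move=> e eU; rewrite -[LHS]/(colsum y' e) cols_eq //; exact: dem.
- move=> r e eU; have [y'_le0 | y'_pos] := leP (y' r e) 0.
    by rewrite (le_trans y'_le0) // mulr_ge0 ?addr_ge0 ?b2R_ge0 // (capacity_ge0 (cap_r r)).
  have := supp_sub eU y'_pos; have := trav r e eU.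
  have := respray_le_rowsum r eU; have := cap_r r.
  by case: (x r e); case: (x r (e.2, e.1)); rewrite /b2R /=; lra.
- by move=> S r depotS; apply: respray_cut (cap_r r) (cut S r depotS).
Qed.

(* The objective does not depend on the spraying. *)
Lemma optimal_respray :
  optimal depot U C D P x y -> optimal depot U C D P x y'.
Proof. by case=> feas opt; split; first exact: feasible_respray. Qed.

End Respray.

Theorem theorem1 (R : realType) (V : finType) (depot : V) (U : {set V * V})
    (Rb : finType) (C D : V * V -> R) (P : R) :
  scarp_graph U ->
  (0 < #|U|)%N ->
  (forall e, e \in U -> 0 <= C e) ->
  (forall e, e \in U -> 0 <= D e) ->
  0 < P ->
  (exists (x : Rb -> V * V -> bool) (y : Rb -> V * V -> R), optimal depot U C D P x y) ->
  exists (x : Rb -> V * V -> bool) (y : Rb -> V * V -> R), optimal depot U C D P x y /\ (#|R2plus U y| < #|U|)%N.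
Proof.
move=> _ U_gt0 _ _ _ [x [y opt_xy]].
have y_ge0 : forall r e, e \in U -> 0 <= y r e by case: opt_xy => -[].
have [y' [y'_ge0 supp_sub rows_eq cols_eq few_R2]] := respray U_gt0 y_ge0.
exists x, y'; split => //.
exact: optimal_respray y_ge0 y'_ge0 supp_sub rows_eq cols_eq opt_xy.
Qed.
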